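(* The generating function $$F_{(132,321)}(x,p,q,u,v,s,t)=\sum_{n\ge0}\ \sum_{\pi\in S_n(132,321)} x^n p^{\operatorname{asc}(\pi)}q^{\operatorname{des}(\pi)}u^{\operatorname{lrmax}(\pi)}v^{\operatorname{rlmax}(\pi)}s^{\operatorname{lrmin}(\pi)}t^{\operatorname{rlmin}(\pi)}$$ is equal to $\dfrac{A}{(1-ptx)(1-pux)(1-ptux)}$, where $$A=1 + s t u v x + q s^2 t u v^2 x^2 - p^3 t^2 u^2 x^3 + p^2 t u x^2 (1 + t + u + s t u v x) - p x\bigl(u + s t^2 u v x (1 + q s u (-1 + v) x) + t (1 + u + s u^2 v x)\bigr).$$
   Context: For $n\ge 0$, $S_n$ denotes the set of permutations $\pi=\pi_1\cdots\pi_n$ of $[n]=\{1,\dots,n\}$ ($S_0$ consists of the empty permutation, for which all statistics are $0$). $\pi$ avoids a pattern $\tau\in S_k$ if no subsequence $\pi_{i_1}\cdots\pi_{i_k}$ ($i_1<\dots<i_k$) satisfies $\pi_{i_a}<\pi_{i_b}\iff\tau_a<\tau_b$; $S_n(\tau,\rho)$ is the set of permutations in $S_n$ avoiding both $\tau$ and $\rho$. $\operatorname{asc}(\pi)$ (resp. $\operatorname{des}(\pi)$) is the number of $i\in[n-1]$ with $\pi_i<\pi_{i+1}$ (resp. $\pi_i>\pi_{i+1}$). $\pi_i$ is a left-to-right maximum (resp. minimum) if it is larger (resp. smaller) than every $\pi_j$ with $j<i$, and a right-to-left maximum (resp. minimum) if it is larger (resp. smaller) than every $\pi_j$ with $j>i$;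 $\operatorname{lrmax},\operatorname{lrmin},\operatorname{rlmax},\operatorname{rlmin}$ count these. *)

From mathcomp Require Import all_boot all_order all_fingroup all_algebra.
Set Implicit Arguments. Unset Strict Implicit. Unset Printing Implicit Defensive.
Import GRing.Theory.

Definition word n (s : {perm 'I_n}) : seq nat := [seq val (s i) | i <- enum 'I_n].

Definition asc (w : seq nat) : nat :=
  \sum_(0 <= i < (size w).-1) (nth 0 w i < nth 0 w i.+1).
Definition des (w : seq nat) : nat :=
  \sum_(0 <= i < (size w).-1) (nth 0 w i > nth 0 w i.+1).
Definition lrmax (w : seq nat) : nat :=
  \sum_(0 <= i < size w) all (fun j => nth 0 w j < nth 0 w i) (iota 0 i).
Definition lrmin (w : seq nat) : nat :=
  \sum_(0 <= i < size w) all (fun j => nth 0 w j > nth 0 w i) (iota 0 i).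
Definition rlmax (w : seq nat) : nat :=
  \sum_(0 <= i < size w) all (fun j => nth 0 w j < nth 0 w i) (iota i.+1 (size w - i.+1)).
Definition rlmin (w : seq nat) : nat :=
  \sum_(0 <= i < size w) all (fun j => nth 0 w j > nth 0 w i) (iota i.+1 (size w - i.+1)).

Definition contains n (s : {perm 'I_n}) (tau : seq nat) : bool :=
  [exists f : {ffun 'I_(size tau) -> 'I_n},
    [forall a : 'I_(size tau), forall b : 'I_(size tau),
      ((a < b)%N ==> (f a < f b)%N) &&
      ((s (f a) < s (f b))%N == (nth 0 tau a < nth 0 tau b)%N)]].
Definition avoids n (s : {perm 'I_n}) (tau : seq nat) : bool := ~~ contains s tau.

Local Open Scope ring_scope.

(* Coefficient of x^n in F_{(132,321)}. *)
Definition Fcoef (R : comNzRingType) (p q u v s t : R) (n : nat) : R :=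
  \sum_(σ : {perm 'I_n} | avoids σ [:: 1; 3; 2]%N && avoids σ [:: 3; 2; 1]%N)
    p ^+ asc (word σ) * q ^+ des (word σ) * u ^+ lrmax (word σ)
    * v ^+ rlmax (word σ) * s ^+ lrmin (word σ) * t ^+ rlmin (word σ).

Definition Anum (R : comNzRingType) (p q u v s t : R) : {poly R} :=
  let x := 'X in
  let c (a : R) := a%:P in
  1 + c (s * t * u * v) * x + c (q * s ^+ 2 * t * u * v ^+ 2) * x ^+ 2
  - c (p ^+ 3 * t ^+ 2 * u ^+ 2) * x ^+ 3
  + c (p ^+ 2 * t * u) * x ^+ 2 * (1 + c t + c u + c (s * t * u * v) * x)
  - c p * x * (c u + c (s * t ^+ 2 * u * v) * x * (1 + c (q * s * u * (-1 + v)) * x)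
               + c t * (1 + c u + c (s * u ^+ 2 * v) * x)).

(* Truncation of the geometric series 1/(1 - a x) = sum_k a^k x^k. *)
Definition geom (R : comNzRingType) (a : R) (N : nat) : {poly R} :=
  \sum_(0 <= k < N.+1) (a ^+ k)%:P * 'X ^+ k.

From mathcomp Require Import all_boot all_order all_fingroup all_algebra.
From mathcomp Require Import zify ring.
Import GRing.Theory.
Set Implicit Arguments. Unset Strict Implicit. Unset Printing Implicit Defensive.

(* Let z be the position of the entry 0 of pi in S_n(132,321).  A descent
   before z would complete a 321 with that 0 and a descent after z a 132, so
   pi increases on both sides of z; moreover its first z entries have no gap,
   since a missing value would complete a 132 or a 321.  Hence pi is the
   identity or m, ..., m+z-1, 0, ..., m-1, m+z, ..., n-1 with m, z >= 1, and
   the six statistics of these words are read off directly.  On the series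
   side, A/((1-ptx)(1-pux)(1-ptux)) equals
     1 + stuv x/(1-ptux) + qs^2tu x^2 (v^2 - v + v/(1-ptux))/((1-ptx)(1-pux)),
   in whose x^2 part the term (pt)^a (pu)^b (ptu)^c with a+b+c = n-2 is
   exactly the weight of the word with m = a+1 and z = b+1 (the v^2 - v at
   c = 0 accounts for the second right-to-left maximum when m + z = n). *)

Lemma size_word n (σ : {perm 'I_n}) : size (word σ) = n.
Proof. by rewrite size_map size_enum_ord. Qed.

Lemma nth_word n (σ : {perm 'I_n}) (i : 'I_n) : nth 0 (word σ) i = σ i.
Proof. by rewrite (nth_map i) ?size_enum_ord // nth_ord_enum. Qed.

Lemma word_inj n : injective (@word n).
Proof.
by move=> σ1 σ2 eq_w; apply/permP => i; apply: val_inj; rewrite /= -!nth_word eq_w.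
Qed.

Lemma word_perm_eq n (σ : {perm 'I_n}) : perm_eq (word σ) (iota 0 n).
Proof.
apply: uniq_perm => [|| x].
- have val_σ_inj : injective (fun i => val (σ i)) by move=> i j /val_inj /perm_inj.
  by rewrite (map_inj_uniq val_σ_inj) enum_uniq.
- exact: iota_uniq.
rewrite mem_iota leq0n add0n /=.
apply/mapP/idP => [[i _ ->] | lt_xn]; first exact: ltn_ord.
by exists ((σ^-1)%g (Ordinal lt_xn)); rewrite ?mem_enum ?permKV.
Qed.

Lemma word_surj n (w : seq nat) :
  perm_eq w (iota 0 n) -> exists σ : {perm 'I_n}, word σ = w.
Proof.
move=> w_perm; have w_uniq : uniq w by rewrite (perm_uniq w_perm) iota_uniq.
have size_w : size w = n by rewrite (perm_size w_perm) size_iota.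
have nth_w_lt i : i < n -> nth 0 w i < n.
  move=> lt_in; have := mem_nth 0 (_ : i < size w).
  by rewrite (perm_mem w_perm) mem_iota size_w; apply.
pose f (i : 'I_n) : 'I_n := insubd i (nth 0 w i).
have val_f i : val (f i) = nth 0 w i by rewrite val_insubd nth_w_lt.
have f_inj : injective f.
  move=> i j /(congr1 val); rewrite !val_f => /eqP.
  by rewrite nth_uniq ?size_w // => /eqP /val_inj.
exists (perm f_inj); apply: (@eq_from_nth _ 0); rewrite size_word // => i lt_in.
by rewrite -[i]/(val (Ordinal lt_in)) nth_word permE val_f.
Qed.

Definition occurs132 (w : seq nat) : Prop := exists i j k,
  [/\ i < j, j < k, k < size w & nth 0 w i < nth 0 w k < nth 0 w j].

Definition occurs321 (w : seq nat) : Prop := exists i j k,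
  [/\ i < j, j < k, k < size w & nth 0 w k < nth 0 w j < nth 0 w i].

Lemma contains3_nth n (σ : {perm 'I_n}) (a b c : nat) :
  contains σ [:: a; b; c] <-> exists i j k, let w := word σ in
    [/\ i < j, j < k, k < n,
      [/\ (nth 0 w i < nth 0 w j) = (a < b), (nth 0 w j < nth 0 w k) = (b < c)
         & (nth 0 w i < nth 0 w k) = (a < c)]
    & [/\ (nth 0 w j < nth 0 w i) = (b < a), (nth 0 w k < nth 0 w j) = (c < b)
         & (nth 0 w k < nth 0 w i) = (c < a)]].
Proof.
split.
  case/existsP => f /forallP cmp.
  pose o0 : 'I_3 := ord0; pose o1 : 'I_3 := Ordinal (isT : 1 < 3).
  pose o2 : 'I_3 := ord_max.
  have cmpP x y := forallP (cmp x) y.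
  move: (cmpP o0 o1) (cmpP o1 o2) (cmpP o0 o2) (cmpP o1 o0) (cmpP o2 o1) (cmpP o2 o0).
  move=> /andP[lt01 /eqP e01] /andP[lt12 /eqP e12] /andP[_ /eqP e02].
  move=> /andP[_ /eqP e10] /andP[_ /eqP e21] /andP[_ /eqP e20].
  exists (f o0), (f o1), (f o2) => /=; rewrite !nth_word.
  by split; rewrite ?ltn_ord ?(implyP lt01) ?(implyP lt12).
case=> i [j [k [lt_ij lt_jk lt_kn cmp cmp']]].
have [lt_in lt_jn] : i < n /\ j < n by split; lia.
pose f := [ffun x : 'I_3 =>
  nth (Ordinal lt_kn) [:: Ordinal lt_in; Ordinal lt_jn; Ordinal lt_kn] x].
apply/existsP; exists f.
apply/forallP => x; apply/forallP => y; rewrite !ffunE -!nth_word.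
case: cmp cmp' => [? ? ?] [? ? ?].
case: x => [[|[|[|?]]] ?] //; case: y => [[|[|[|?]]] ?] //=; rewrite ?ltnn //;
  by try (apply/andP; split); try lia; apply/eqP.
Qed.

Lemma contains132_occurs n (σ : {perm 'I_n}) :
  contains σ [:: 1; 3; 2] <-> occurs132 (word σ).
Proof.
rewrite contains3_nth /occurs132 size_word.
split=> [[i [j [k [? ? ? [? ? ?] [? ? ?]]]]] | [i [j [k [? ? ? ?]]]]];
  by exists i, j, k; split=> //; try split; lia.
Qed.

Lemma contains321_occurs n (σ : {perm 'I_n}) :
  contains σ [:: 3; 2; 1] <-> occurs321 (word σ).
Proof.
rewrite contains3_nth /occurs321 size_word.
split=> [[i [j [k [? ? ? [? ? ?] [? ? ?]]]]] | [i [j [k [? ? ? ?]]]]];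
  by exists i, j, k; split=> //; try split; lia.
Qed.

Ltac case_ifs := repeat case: ifP => ?.

Definition block_swap n m z : seq nat :=
  iota m z ++ iota 0 m ++ iota (m + z) (n - (m + z)).

Lemma size_block_swap n m z : m + z <= n -> size (block_swap n m z) = n.
Proof. by move=> le_mzn; rewrite !size_cat !size_iota; lia. Qed.

Lemma nth_block_swap n m z i : i < n ->
  nth 0 (block_swap n m z) i = if i < z then m + i else if i < m + z then i - z else i.
Proof.
by move=> lt_in; rewrite !nth_cat !size_iota; case_ifs; rewrite nth_iota; lia.
Qed.

Lemma iota_block_split n m z : m + z <= n ->
  iota 0 n = iota 0 m ++ iota m z ++ iota (m + z) (n - (m + z)).
Proof. by move=> le_mzn; rewrite catA -iotaD -iotaD subnKC. Qed.

Lemma block_swap_perm n m z : m + z <= n -> perm_eq (block_swap n m z) (iota 0 n).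
Proof. by move=> le_mzn; rewrite (iota_block_split le_mzn) perm_catCA. Qed.

Lemma block_swap_id n m z : m + z <= n -> (m == 0) || (z == 0) ->
  block_swap n m z = iota 0 n.
Proof.
move=> le_mzn mz0; apply: (@eq_from_nth _ 0) => [|i].
  by rewrite size_block_swap ?size_iota.
rewrite size_block_swap // => lt_in.
by rewrite nth_block_swap // nth_iota //; case_ifs; lia.
Qed.

Lemma block_swap_no132 n m z : m + z <= n -> ~ occurs132 (block_swap n m z).
Proof.
move=> le_mzn [i [j [k [lt_ij lt_jk]]]]; rewrite size_block_swap // => lt_kn.
by rewrite !nth_block_swap; try lia; case_ifs; lia.
Qed.

Lemma block_swap_no321 n m z : m + z <= n -> ~ occurs321 (block_swap n m z).
Proof.
move=> le_mzn [i [j [k [lt_ij lt_jk]]]]; rewrite size_block_swap // => lt_kn.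
by rewrite !nth_block_swap; try lia; case_ifs; lia.
Qed.

Section AvoidingWord.

Variables (n : nat) (w : seq nat).
Hypotheses (w_perm : perm_eq w (iota 0 n))
  (w_no132 : ~ occurs132 w) (w_no321 : ~ occurs321 w).

Let size_w : size w = n. Proof. by rewrite (perm_size w_perm) size_iota. Qed.

Let mem_w x : (x \in w) = (x < n). Proof. by rewrite (perm_mem w_perm) mem_iota. Qed.

Let nth_w_inj i j : i < n -> j < n -> nth 0 w i = nth 0 w j -> i = j.
Proof.
move=> lt_in lt_jn /eqP; rewrite nth_uniq ?size_w ?(perm_uniq w_perm) ?iota_uniq //.
by move/eqP.
Qed.

Local Notation z := (index 0 w).
Local Notation m := (nth 0 w 0).

Let nth_index0 : nth 0 w z = 0.
Proof.
by case: (boolP (0 \in w)) => [/nth_index | /memNindex ->] //; rewrite nth_default.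
Qed.

Let nth_before_index0 i : i < z -> 0 < nth 0 w i.
Proof. by move/(before_find 0)/negbT; rewrite lt0n. Qed.

Let index0_lt i : i < z -> z < n.
Proof.
move=> lt_iz; rewrite -size_w index_mem mem_w.
by have := index_size 0 w; rewrite size_w; lia.
Qed.

Lemma nth_succ_before_index0 i : i.+1 < z -> nth 0 w i.+1 = (nth 0 w i).+1.
Proof.
move=> lt_i1z; have lt_zn := index0_lt lt_i1z.
have [x_pos y_pos] := (nth_before_index0 (ltnW lt_i1z), nth_before_index0 lt_i1z).
have [lt_yx | lt_xy | eq_xy] := ltngtP (nth 0 w i.+1) (nth 0 w i).
- by case: w_no321; exists i, i.+1, z; rewrite nth_index0 size_w; split; lia.
- have lt_yn : nth 0 w i.+1 < n by rewrite -mem_w mem_nth // size_w; lia.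
  case: (ltngtP (nth 0 w i.+1) (nth 0 w i).+1) => // lt_succ; first lia.
  (* The skipped value sits at some l: l > i.+1 gives a 132, l < i a 321. *)
  have: (nth 0 w i).+1 \in w by rewrite mem_w; lia.
  move=> /[dup] /(nth_index 0) nth_l; rewrite -index_mem size_w.
  move: (index _ w) nth_l => l nth_l lt_ln.
  case: (ltngtP l i) => [lt_li | lt_il | eq_li].
  + by case: w_no321; exists l, i, z; rewrite nth_index0 nth_l size_w; split; lia.
  + case: (ltngtP l i.+1) => [|lt_i1l | eq_li1]; first lia.
      by case: w_no132; exists i, i.+1, l; rewrite nth_l size_w; split; lia.
    by move: lt_succ; rewrite -eq_li1 nth_l ltnn.
  + by move: nth_l; rewrite eq_li => /n_Sn.
- by move/nth_w_inj: eq_xy; lia.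
Qed.

Lemma take_index0 : take z w = iota m z.
Proof.
have le_zn : z <= n by rewrite -size_w index_size.
apply: (@eq_from_nth _ 0) => [|i]; first by rewrite size_takel ?size_w // size_iota.
rewrite size_takel ?size_w // => lt_iz; rewrite nth_take // nth_iota //.
elim: i lt_iz => [|i IHi] lt_iz; first by rewrite addn0.
by rewrite nth_succ_before_index0 // IHi ?addnS // ltnW.
Qed.

Lemma sorted_drop_index0 : sorted ltn (drop z w).
Proof.
apply/(sortedP 0) => i; rewrite size_drop size_w !nth_drop addnS => lt_i1.
have [//|lt_yx|eq_xy] := ltngtP (nth 0 w (z + i)) (nth 0 w (z + i).+1).
  case: (posnP i) => [i0 | i_pos]; first by move: lt_yx; rewrite i0 addn0 nth_index0.
  have y_pos : 0 < nth 0 w (z + i).+1.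
    rewrite lt0n; apply/eqP => y0.
    suff: (z + i).+1 = z by lia.
    by apply: nth_w_inj; rewrite ?y0 ?nth_index0 //; lia.
  case: w_no132; exists z, (z + i), (z + i).+1.
  by rewrite nth_index0 size_w; split; lia.
by move/nth_w_inj: eq_xy; lia.
Qed.

Lemma avoiding_word_block_swap : m + z <= n /\ w = block_swap n m z.
Proof.
have le_mzn : m + z <= n.
  case: (posnP z) => [z0 | z_pos]; first by move: nth_index0; rewrite z0 => ->.
  have : m + z.-1 \in take z w by rewrite take_index0 mem_iota; lia.
  by move/mem_take; rewrite mem_w; lia.
split=> //; rewrite -{1}[w](cat_take_drop z) take_index0 /block_swap; congr (_ ++ _).
apply: (irr_sorted_eq ltn_trans ltnn); first exact: sorted_drop_index0.
  apply: (subseq_sorted ltn_trans _ (iota_ltn_sorted 0 n)).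
  by rewrite (iota_block_split le_mzn) cat_subseq ?suffix_subseq.
apply: perm_mem; rewrite -(perm_cat2l (take z w)) cat_take_drop take_index0.
by apply: perm_trans w_perm _; rewrite perm_sym; exact: (block_swap_perm le_mzn).
Qed.

End AvoidingWord.

Lemma sum_two_intervals N a b c d : a <= b -> b <= c -> c <= d ->
  \sum_(0 <= i < N) ((a <= i < b) || (c <= i < d) : nat)
  = (minn N b - minn N a) + (minn N d - minn N c).
Proof.
move=> le_ab le_bc le_cd; elim: N => [|N IHN]; first by rewrite big_geq //; lia.
by rewrite big_nat_recr //= IHN; case: (leqP a N); case: (ltnP N b);
  case: (leqP c N); case: (ltnP N d) => /= *; lia.
Qed.

Section BlockSwapStatistics.

Variables (n m z : nat).
Hypotheses (m_pos : 0 < m) (z_pos : 0 < z) (le_mzn : m + z <= n).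

Local Notation w := (block_swap n m z).

Lemma asc_block_swap : asc w = n - 2.
Proof.
rewrite /asc size_block_swap //.
rewrite (eq_big_nat _ _ (F2 := fun i => (0 <= i < z.-1) || (z <= i < n.-1) : nat)).
  by rewrite sum_two_intervals; lia.
move=> i lt_i; rewrite !nth_block_swap; try lia.
by congr nat_of_bool; apply/idP/idP; case_ifs; lia.
Qed.

Lemma des_block_swap : des w = 1.
Proof.
rewrite /des size_block_swap //.
rewrite (eq_big_nat _ _ (F2 := fun i => (z.-1 <= i < z) || (z <= i < z) : nat)).
  by rewrite sum_two_intervals; lia.
move=> i lt_i; rewrite !nth_block_swap; try lia.
by congr nat_of_bool; apply/idP/idP; case_ifs; lia.
Qed.

Lemma lrmax_block_swap : lrmax w = n - m.
Proof.
rewrite /lrmax size_block_swap //.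
rewrite (eq_big_nat _ _ (F2 := fun i => (0 <= i < z) || (m + z <= i < n) : nat)).
  by rewrite sum_two_intervals; lia.
move=> i lt_i; congr nat_of_bool.
apply/allP/idP => [lrmax_i | lrmax_i j /[!mem_iota] lt_j].
  by have := lrmax_i 0; rewrite mem_iota !nth_block_swap; try lia; case_ifs; lia.
by move: lrmax_i; rewrite !nth_block_swap; try lia; case_ifs; lia.
Qed.

Lemma rlmax_block_swap : rlmax w = (m + z == n).+1.
Proof.
rewrite /rlmax size_block_swap //.
rewrite (eq_big_nat _ _
  (F2 := fun i => (z.-1 <= i < z.-1 + (m + z == n)) || (n.-1 <= i < n) : nat)).
  by rewrite sum_two_intervals; case: (m + z =P n); lia.
move=> i lt_i; congr nat_of_bool.
apply/allP/idP => [rlmax_i | rlmax_i j /[!mem_iota] lt_j].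
  apply/negPn/negP => not_i.
  have [j lt_j gt_j] : exists2 j, i < j < n & nth 0 w j > nth 0 w i.
    case: (boolP ((i == z.-1) && (m + z < n))) => [/andP[/eqP iz lt_mzn] | ne].
      by exists (m + z); rewrite ?nth_block_swap; try lia; case_ifs; lia.
    exists i.+1; rewrite ?nth_block_swap; move: ne not_i;
      by case: (m + z =P n); try lia; case_ifs; lia.
  by have := rlmax_i j; rewrite mem_iota; lia.
by move: rlmax_i; rewrite !nth_block_swap; case: (m + z =P n); try lia; case_ifs; lia.
Qed.

Lemma lrmin_block_swap : lrmin w = 2.
Proof.
rewrite /lrmin size_block_swap //.
rewrite (eq_big_nat _ _ (F2 := fun i => (0 <= i < 1) || (z <= i < z.+1) : nat)).
  by rewrite sum_two_intervals; lia.
move=> i lt_i; congr nat_of_bool.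
apply/allP/idP => [lrmin_i | lrmin_i j /[!mem_iota] lt_j].
  apply/negPn/negP => not_i.
  have [j lt_j gt_j] : exists2 j, j < i & nth 0 w j < nth 0 w i.
    case: (ltnP i z) => [lt_iz | le_zi].
      by exists 0; rewrite ?nth_block_swap; try lia; case_ifs; lia.
    by exists z; rewrite ?nth_block_swap; try lia; case_ifs; lia.
  by have := lrmin_i j; rewrite mem_iota; lia.
by move: lrmin_i; rewrite !nth_block_swap; try lia; case_ifs; lia.
Qed.

Lemma rlmin_block_swap : rlmin w = n - z.
Proof.
rewrite /rlmin size_block_swap //.
rewrite (eq_big_nat _ _ (F2 := fun i => (z <= i < n) || (n <= i < n) : nat)).
  by rewrite sum_two_intervals; lia.
move=> i lt_i; congr nat_of_bool.
apply/allP/idP => [rlmin_i | rlmin_i j /[!mem_iota] lt_j].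
  by have := rlmin_i z; rewrite mem_iota !nth_block_swap; try lia; case_ifs; lia.
by move: rlmin_i; rewrite !nth_block_swap; try lia; case_ifs; lia.
Qed.

End BlockSwapStatistics.

Section IdentityStatistics.

Variable n : nat.

Lemma asc_iota : asc (iota 0 n) = n.-1.
Proof.
rewrite /asc size_iota.
rewrite (eq_big_nat _ _ (F2 := fun i => (0 <= i < n.-1) || (n <= i < n) : nat)).
  by rewrite sum_two_intervals; lia.
by move=> i lt_i; rewrite !nth_iota; try lia; congr nat_of_bool; apply/idP/idP; lia.
Qed.

Lemma des_iota : des (iota 0 n) = 0.
Proof.
rewrite /des size_iota big1_seq // => i /[!mem_index_iota] lt_i.
by rewrite !nth_iota; try lia; rewrite ltnNge leqW.
Qed.

Lemma lrmax_iota : lrmax (iota 0 n) = n.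
Proof.
rewrite /lrmax size_iota.
rewrite (eq_big_nat _ _ (F2 := fun i => (0 <= i < n) || (n <= i < n) : nat)).
  by rewrite sum_two_intervals; lia.
move=> i lt_i; congr nat_of_bool.
apply/allP/idP => [_ | _ j /[!mem_iota] lt_j]; first lia.
by rewrite !nth_iota; lia.
Qed.

Lemma rlmin_iota : rlmin (iota 0 n) = n.
Proof.
rewrite /rlmin size_iota.
rewrite (eq_big_nat _ _ (F2 := fun i => (0 <= i < n) || (n <= i < n) : nat)).
  by rewrite sum_two_intervals; lia.
move=> i lt_i; congr nat_of_bool.
apply/allP/idP => [_ | _ j /[!mem_iota] lt_j]; first lia.
by rewrite !nth_iota; lia.
Qed.

Lemma lrmin_iota : lrmin (iota 0 n) = (0 < n).
Proof.
rewrite /lrmin size_iota.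
rewrite (eq_big_nat _ _ (F2 := fun i => (0 <= i < 1) || (1 <= i < 1) : nat)).
  by rewrite sum_two_intervals //; case: (posnP n) => [-> // | n_pos] /=; lia.
move=> i lt_i; congr nat_of_bool.
apply/allP/idP => [lrmin_i | first_i j /[!mem_iota] lt_j].
  by have := lrmin_i 0; rewrite mem_iota !nth_iota; lia.
by rewrite !nth_iota; lia.
Qed.

Lemma rlmax_iota : rlmax (iota 0 n) = (0 < n).
Proof.
rewrite /rlmax size_iota.
rewrite (eq_big_nat _ _ (F2 := fun i => (n.-1 <= i < n) || (n <= i < n) : nat)).
  by rewrite sum_two_intervals //; case: (posnP n) => [-> // | n_pos] /=; lia.
move=> i lt_i; congr nat_of_bool.
apply/allP/idP => [rlmax_i | last_i j /[!mem_iota] lt_j].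
  case: (ltnP i n.-1) => [lt_in1 | ]; last lia.
  by have := rlmax_i i.+1; rewrite mem_iota !nth_iota; lia.
by rewrite !nth_iota; lia.
Qed.

End IdentityStatistics.

Lemma avoids_132_321_block_swap n (σ : {perm 'I_n}) :
  avoids σ [:: 1; 3; 2] && avoids σ [:: 3; 2; 1] <->
  exists m z, m + z <= n /\ word σ = block_swap n m z.
Proof.
split.
  case/andP => /negP c132 /negP c321.
  have no132 : ~ occurs132 (word σ) by move/contains132_occurs.
  have no321 : ~ occurs321 (word σ) by move/contains321_occurs.
  have [le_mzn eq_w] := avoiding_word_block_swap (word_perm_eq σ) no132 no321.
  by exists (nth 0 (word σ) 0), (index 0 (word σ)).
case=> m [z [le_mzn eq_w]]; apply/andP; split; apply/negP.
  by move/contains132_occurs; rewrite eq_w; exact: block_swap_no132.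
by move/contains321_occurs; rewrite eq_w; exact: block_swap_no321.
Qed.

Lemma block_swap_inj n m z m' z' : 0 < m -> 0 < z -> m + z <= n ->
  0 < m' -> 0 < z' -> m' + z' <= n ->
  block_swap n m z = block_swap n m' z' -> m = m' /\ z = z'.
Proof.
move=> m_pos z_pos le_mzn m'_pos z'_pos le_mzn' eq_w.
have := congr1 (nth 0 ^~ 0) eq_w; have := congr1 (nth 0 ^~ z) eq_w.
by rewrite /= !nth_block_swap; try lia; case_ifs; lia.
Qed.

Definition avoiding_words n : seq (seq nat) :=
  iota 0 n :: [seq block_swap n a.+1 b.+1 | a <- index_iota 0 n.-1,
                                             b <- index_iota 0 (n.-1 - a)].

Lemma mem_avoiding_words n w :
  w \in avoiding_words n <-> exists m z, m + z <= n /\ w = block_swap n m z.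
Proof.
rewrite inE; split.
  case/orP => [/eqP-> | /allpairsPdep[a [b [ha hb ->]]]].
    by exists 0, 0; rewrite block_swap_id.
  by exists a.+1, b.+1; move: ha hb; rewrite !mem_index_iota; split=> //; lia.
case=> m [z [le_mzn ->]]; case: (boolP ((m == 0) || (z == 0))) => [mz0 | ].
  by rewrite block_swap_id ?eqxx.
rewrite negb_or -!lt0n => /andP[m_pos z_pos]; apply/orP; right; apply/allpairsPdep.
exists m.-1, z.-1; rewrite !mem_index_iota !prednK //; split=> //; lia.
Qed.

Lemma avoiding_words_uniq n : uniq (avoiding_words n).
Proof.
rewrite /= allpairs_uniq_dep ?andbT.
- apply/allpairsPdep => -[a [b [ha hb]]]; move: ha hb; rewrite !mem_index_iota => ha hb.
  move/(congr1 (nth 0 ^~ 0)); rewrite /= nth_iota ?nth_block_swap; try lia.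
- exact: iota_uniq.
- by move=> a _; exact: iota_uniq.
move=> [? ?] [? ?] /allpairsPdep[a [b [ha hb [-> ->]]]].
move=> /allpairsPdep[a' [b' [ha' hb' [-> ->]]]] /= eq_w.
move: ha hb ha' hb'; rewrite !mem_index_iota => ha hb ha' hb'.
have [[->] [->]] // : a.+1 = a'.+1 /\ b.+1 = b'.+1.
by apply: (block_swap_inj _ _ _ _ _ _ eq_w); lia.
Qed.

Local Open Scope ring_scope.

Section TruncatedSeries.

Variable R : comNzRingType.

Lemma coef_geom (a : R) N i : (i <= N)%N -> (geom a N)`_i = a ^+ i.
Proof.
have -> : geom a N = \poly_(k < N.+1) a ^+ k.
  by rewrite poly_def /geom big_mkord; apply: eq_bigr => k _; rewrite mul_polyC.
by rewrite coef_poly ltnS => ->.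
Qed.

Lemma mulX_geom (a : R) N :
  (1 - a%:P * 'X) * geom a N = 1 - (a ^+ N.+1)%:P * 'X ^+ N.+1.
Proof.
elim: N => [|N IHN]; first by rewrite /geom big_nat1 !expr0 !expr1 mulr1 polyC1 mulr1.
by rewrite /geom big_nat_recr //= mulrDr -/(geom a N) IHN !exprS rmorphM; ring.
Qed.

Lemma coef_mul_one_subXn (P Q : {poly R}) N : (P * (1 - Q * 'X ^+ N.+1))`_N = P`_N.
Proof. by rewrite mulrBr mulr1 coefB mulrA coefMXn ltnSn subr0. Qed.

End TruncatedSeries.

Section GeneratingFunction.

Variables (R : comNzRingType) (p q u v s t : R).

Definition weight (w : seq nat) : R :=
  p ^+ asc w * q ^+ des w * u ^+ lrmax w * v ^+ rlmax w * s ^+ lrmin w * t ^+ rlmin w.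

Definition block_weight n a b : R :=
  q * s ^+ 2 * t * u * ((p * t) ^+ a * ((p * u) ^+ b *
    ((if (n - 2 - a - b == 0)%N then v ^+ 2 - v else 0)
     + v * (p * t * u) ^+ (n - 2 - a - b)%N))).

Lemma weight_iota n :
  weight (iota 0 n) = if n is k.+1 then s * t * u * v * (p * t * u) ^+ k else 1.
Proof.
rewrite /weight asc_iota des_iota lrmax_iota rlmax_iota lrmin_iota rlmin_iota.
by case: n => [|k] /=; rewrite ?expr0 ?mulr1 // !exprS !exprMn; ring.
Qed.

Lemma weight_block_swap n a b : (a.+1 + b.+1 <= n)%N ->
  weight (block_swap n a.+1 b.+1) = block_weight n a b.
Proof.
move=> le_n; rewrite /weight /block_weight asc_block_swap // des_block_swap //.
rewrite lrmax_block_swap // rlmax_block_swap // lrmin_block_swap // rlmin_block_swap //.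
have [c ->] : exists c, n = (a + b + c).+2 by exists (n - (a + b).+2)%N; lia.
have -> : ((a + b + c).+2 - 2 - a - b = c)%N by lia.
have -> : ((a + b + c).+2 - a.+1 = (b + c).+1)%N by lia.
have -> : ((a + b + c).+2 - b.+1 = (a + c).+1)%N by lia.
have -> : ((a + b + c).+2 - 2 = a + b + c)%N by lia.
have -> : (a.+1 + b.+1 == (a + b + c).+2) = (c == 0)%N by apply/eqP/eqP; lia.
by case: c => [|c] /=; rewrite ?addn0 !(exprD, exprS) !exprMn ?expr0; ring.
Qed.

Lemma Fcoef_enum n : Fcoef p q u v s t n =
  weight (iota 0 n)
  + \sum_(a < n.-1) \sum_(b < n.-1 - a) weight (block_swap n a.+1 b.+1).
Proof.
pose avoiding (σ : {perm 'I_n}) := avoids σ [:: 1; 3; 2] && avoids σ [:: 3; 2; 1].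
have -> : Fcoef p q u v s t n =
    \sum_(w <- [seq word σ | σ <- index_enum {perm 'I_n} & avoiding σ]) weight w.
  by rewrite big_map big_filter.
rewrite (perm_big (avoiding_words n)) /=.
  rewrite big_cons big_allpairs_dep /= big_mkord; congr (_ + _).
  by apply: eq_bigr => a _; rewrite big_mkord.
apply: uniq_perm => [|| w].
- by rewrite map_inj_uniq ?filter_uniq ?index_enum_uniq //; exact: word_inj.
- exact: avoiding_words_uniq.
apply/mapP/idP => [[σ] | /mem_avoiding_words[m [z [le_mzn ->]]]].
  rewrite mem_filter => /andP[/avoids_132_321_block_swap [m [z [le_mzn eq_w]]] _] ->.
  by apply/mem_avoiding_words; exists m, z.
have [σ eq_σ] := word_surj (block_swap_perm le_mzn).
exists σ => //; rewrite mem_filter mem_index_enum andbT.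
by apply/avoids_132_321_block_swap; exists m, z.
Qed.

(* The partial-fraction form of F quoted in the header, with every geometric
   series truncated at degree n. *)
Definition Fsplit n : {poly R} :=
  1 + (s * t * u * v)%:P * ('X * geom (p * t * u) n)
  + (q * s ^+ 2 * t * u)%:P * ('X^2 * (geom (p * t) n * (geom (p * u) n
       * ((v ^+ 2 - v)%:P + v%:P * geom (p * t * u) n)))).

Lemma coef_Anum_geom n :
  (Anum p q u v s t * geom (p * t) n * geom (p * u) n * geom (p * t * u) n)`_n
  = (Fsplit n)`_n.
Proof.
set G1 := geom (p * t) n; set G2 := geom (p * u) n; set G3 := geom (p * t * u) n.
(* Each factor (1 - a X) * geom a n is 1 modulo X^(n+1). *)
have -> : Anum p q u v s t * G1 * G2 * G3 =
    1 * ((1 - (p * t)%:P * 'X) * G1) * ((1 - (p * u)%:P * 'X) * G2)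
      * ((1 - (p * t * u)%:P * 'X) * G3)
    + (s * t * u * v)%:P * ('X * G3) * ((1 - (p * t)%:P * 'X) * G1)
      * ((1 - (p * u)%:P * 'X) * G2)
    + (q * s ^+ 2 * t * u)%:P * ('X^2 * (G1 * (G2 * (v ^+ 2 - v)%:P)))
      * ((1 - (p * t * u)%:P * 'X) * G3)
    + (q * s ^+ 2 * t * u)%:P * ('X^2 * (G1 * (G2 * (v%:P * G3)))).
  by rewrite /Anum /=; ring.
rewrite !mulX_geom !coefD !coef_mul_one_subXn -!coefD.
by apply: (congr1 (fun P : {poly R} => P`_n)); rewrite /Fsplit -/G1 -/G2 -/G3; ring.
Qed.

Lemma coef_Fsplit n : (Fsplit n)`_n =
  (if n is k.+1 then s * t * u * v * (p * t * u) ^+ k else 1)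
  + \sum_(a < n.-1) \sum_(b < n.-1 - a) block_weight n a b.
Proof.
rewrite /Fsplit /block_weight !coefD coef1 !coefCM coefXM coefXnM.
case: n => [|[|k]] /=; rewrite ?big_ord0.
- by rewrite !mulr0 !addr0.
- by rewrite coef_geom // add0r !mulr0 !addr0.
rewrite coef_geom // add0r !subSS subn0 (coefM (geom (p * t) _)) mulr_sumr.
congr (_ + _).
apply: eq_bigr => a _; have le_ak : (a <= k)%N by rewrite -ltnS.
rewrite coef_geom; last by apply: leq_trans le_ak _; rewrite leqW.
rewrite coefM -!mulr_sumr subSn //; congr (_ * (_ * _)).
apply: eq_bigr => b _; have le_bk : (b <= k - a)%N by rewrite -ltnS.
by rewrite coefD coefC coefCM !coef_geom //; lia.
Qed.

End GeneratingFunction.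

Theorem theorem5 (R : comNzRingType) (p q u v s t : R) (n : nat) :
  Fcoef p q u v s t n =
  (Anum p q u v s t * geom (p * t) n * geom (p * u) n * geom (p * t * u) n)`_n.
Proof.
rewrite Fcoef_enum coef_Anum_geom coef_Fsplit weight_iota; congr (_ + _).
apply: eq_bigr => a _; apply: eq_bigr => b _; rewrite weight_block_swap //.
by have := ltn_ord b; lia.
Qed.
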